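(* Let $X$ be a nonempty set, let $w$ be a metric modular on $X$, let $x_0\in X$ and let $X_w^*=\{x\in X:\exists\,\lambda>0,\ w_\lambda(x,x_0)<\infty\}$. Let $T\colon X_w^*\to X_w^*$ be a map and let $k\in(0,1)$, $\lambda_0>0$ be such that $w_{k\lambda}(Tx,Ty)\le k\,w_\lambda(x,y)$ for all $0<\lambda\le\lambda_0$ and all $x,y\in X_w^*$. Let $0<\lambda<\lambda_0$ and let $\lambda_1,\lambda_2>0$ with $\lambda_1+\lambda_2=(1-k)\lambda$. Then $$w_\lambda(x,y)\le \frac{w_{\lambda_1}(x,Tx)+w_{\lambda_2}(y,Ty)}{1-k}$$ for every $x,y\in X_w^*$ such that $w_\lambda(x,y)<\infty$.
   Context: A metric modular on a nonempty set $X$ is a function $w\colon(0,\infty)\times X\times X\to[0,\infty]$, written $(\lambda,x,y)\mapsto w_\lambda(x,y)$, such that for all $x,y,z\in X$: (1) $w_\lambda(x,y)=0$ for all $\lambda>0$ if and only if $x=y$; (2) $w_\lambda(x,y)=w_\lambda(y,x)$ for all $\lambda>0$; (3) $w_{\lambda+\mu}(x,y)\le w_\lambda(x,z)+w_\mu(y,z)$ for all $\lambda,\mu>0$. Arithmetic is in $[0,\infty]$. *)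

From HB Require Import structures.
From mathcomp Require Import all_boot all_order all_algebra.
From mathcomp Require Import all_classical all_reals.
From mathcomp Require Export constructive_ereal.
Set Implicit Arguments. Unset Strict Implicit. Unset Printing Implicit Defensive.
Import Order.TTheory GRing.Theory Num.Theory.
Local Open Scope ring_scope.
Local Open Scope ereal_scope.

(* A metric modular on X: w : (0,oo) x X x X -> [0,oo]; we take w defined on
   all of R but only constrain it for lambda > 0. *)
Definition metric_modular (R : realType) (X : Type) (w : R -> X -> X -> \bar R) : Prop :=
  (forall l x y, (0 < l)%R -> 0 <= w l x y) /\
  (forall x y, (forall l, (0 < l)%R -> w l x y = 0) <-> x = y) /\
  (forall l x y, (0 < l)%R -> w l x y = w l y x) /\
  (forall l m x y z, (0 < l)%R -> (0 < m)%R -> w (l + m)%R x y <= w l x z + w m y z).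

Definition modular_space (R : realType) (X : Type) (w : R -> X -> X -> \bar R) (x0 : X)
  : X -> Prop :=
  fun x => exists l : R, (0 < l)%R /\ w l x x0 < +oo.

From HB Require Import structures.
From mathcomp Require Import all_boot all_order all_algebra.
From mathcomp Require Import all_classical all_reals.
From mathcomp Require Import lra.
Import Order.TTheory GRing.Theory Num.Theory.
Local Open Scope ring_scope.
Local Open Scope ereal_scope.

(* Going from x to y through Tx and Ty costs w_{l1}(x,Tx) + w_{k lambda}(Tx,Ty)
   + w_{l2}(Ty,y), and the contraction bounds the middle term by k w_lambda(x,y).
   Since w_lambda(x,y) is finite, it can be absorbed into the left-hand side.
   The contraction is only used at the points x and y themselves. *)

Lemma fin_lee_absorb (R : realType) (k : R) (a b : \bar R) :
  (k < 1)%R -> a \is a fin_num -> a <= b + k%:E * a ->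
  a <= b * ((1 - k)^-1)%:E.
Proof.
move=> k1; have k1' : (0 < 1 - k)%R by rewrite subr_gt0.
move=> /fineK <-; set r := fine a.
case: b => [b| |] //=.
- by rewrite -EFinM -EFinD !lee_fin ler_pdivlMr //; lra.
- by move=> _; rewrite gt0_mulye ?leey ?lte_fin ?invr_gt0.
Qed.

Section MetricModular.
Context {R : realType} {X : Type} {w : R -> X -> X -> \bar R}.
Hypothesis hw : metric_modular w.

Lemma modular_ge0 {l} x y : (0 < l)%R -> 0 <= w l x y.
Proof. by case: hw => + _; apply. Qed.

Lemma modular_sym {l} x y : (0 < l)%R -> w l x y = w l y x.
Proof. by case: hw => _ [_ [+ _]]; apply. Qed.

Lemma modular_triangle {l m} x y z : (0 < l)%R -> (0 < m)%R ->
  w (l + m)%R x y <= w l x z + w m z y.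
Proof.
move=> l0 m0; rewrite [w m z y]modular_sym //.
by case: hw => _ [_ [_]]; apply.
Qed.

Lemma modular_triangle3 {l m n} x u v y : (0 < l)%R -> (0 < m)%R -> (0 < n)%R ->
  w (l + m + n)%R x y <= w l x u + w m u v + w n v y.
Proof.
move=> l0 m0 n0; rewrite -addrA -addeA.
apply: le_trans (modular_triangle x y u l0 (addr_gt0 m0 n0)) _.
exact/leeD2l/modular_triangle.
Qed.

End MetricModular.

Theorem proposition4p5 (R : realType) (X : Type) (w : R -> X -> X -> \bar R) (x0 : X)
  (T : X -> X) (k lambda0 : R) :
  metric_modular w ->
  (forall x, modular_space w x0 x -> modular_space w x0 (T x)) ->
  (0 < k < 1)%R -> (0 < lambda0)%R ->
  (forall l x y, (0 < l)%R -> (l <= lambda0)%R ->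
     modular_space w x0 x -> modular_space w x0 y ->
     w (k * l)%R (T x) (T y) <= k%:E * w l x y) ->
  forall lambda l1 l2 : R, (0 < lambda)%R -> (lambda < lambda0)%R ->
  (0 < l1)%R -> (0 < l2)%R -> (l1 + l2 = (1 - k) * lambda)%R ->
  forall x y, modular_space w x0 x -> modular_space w x0 y ->
  w lambda x y < +oo ->
  w lambda x y <= (w l1 x (T x) + w l2 y (T y)) * ((1 - k)^-1)%:E.
Proof.
move=> hw _ /andP[k0 k1] _ contr lambda l1 l2 lam0 lam_lt l10 l20 hl x y sx sy wfin.
have split_lambda : lambda = (l1 + k * lambda + l2)%R by lra.
have fin_w : w lambda x y \is a fin_num.
  by rewrite ge0_fin_numE // (modular_ge0 hw).
apply: fin_lee_absorb => //.
have chain := modular_triangle3 hw x (T x) (T y) y l10 (mulr_gt0 k0 lam0) l20.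
rewrite -split_lambda in chain; apply: (le_trans chain).
rewrite addeAC [w l2 (T y) y](modular_sym hw) //.
by apply: leeD2l; apply: contr (ltW lam_lt) sx sy.
Qed.
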